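(* Let $\zeta_1,\ldots,\zeta_n$ be independent Bernoulli random variables with $p_i=1-q_i=\mathbb{P}(\zeta_i=1)$, and $V_2=\sum_{i=1}^n\zeta_i$. Let $r>1$, $p\in(0,1)$, $q=1-p$ with $rq=p\sum_{i=1}^np_i$. Then $$\sup_{z\ge0}|\mathbb{E}[\mathscr{A}g_z(V_2)]|\le\left(2p^{-(r+1)}-p^{-1}\right)\sum_{i=1}^np_i(1-pq_i).$$
   Context: $x^+=\max\{x,0\}$. $\mathrm{N}_{r,p}$ is negative binomial with $\mathbb{P}(\mathrm{N}_{r,p}=k)=\binom{r+k-1}{k}p^rq^k$, $k\in\mathbb{Z}_+$. The Stein operator is $\mathscr{A}g(k)=q(r+k)g(k+1)-kg(k)$. For $z\ge0$, $g_z(0)=0$ and for $k\ge1$, $g_z(k)=-\sum_{j\ge k}\frac{r(r+1)\cdots(r+j-1)}{r(r+1)\cdots(r+k-1)}\frac{(k-1)!}{j!}q^{j-k}\big[(j-z)^+-\mathbb{E}[(\mathrm{N}_{r,p}-z)^+]\big]$, so that $\mathbb{E}[\mathscr{A}g_z(V)]=\mathbb{E}[(V-z)^+]-\mathbb{E}[(\mathrm{N}_{r,p}-z)^+]$. *)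

From mathcomp Require Import all_boot all_order all_algebra.
From mathcomp Require Import all_classical all_reals all_analysis.
Set Implicit Arguments. Unset Strict Implicit. Unset Printing Implicit Defensive.
Import Order.TTheory GRing.Theory Num.Theory numFieldNormedType.Exports.
Local Open Scope ring_scope.

Section Defs.
Variable R : realType.

Definition rseries (u : nat -> R) : R := limn (series u).

Definition posp (x : R) : R := Num.max x 0.

Definition rising (r : R) (k : nat) : R := \prod_(i < k) (r + i%:R).

(* P(N_{r,p} = k) = binom(r+k-1,k) p^r q^k, q = 1 - p *)
Definition nb_pmf (r p : R) (k : nat) : R :=
  rising r k / (k`!)%:R * powR p r * (1 - p) ^+ k.

Definition nb_posp_mean (r p z : R) : R :=
  rseries (fun k => nb_pmf r p k * posp (k%:R - z)).

Definition gz (r p z : R) (k : nat) : R :=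
  if k is 0 then 0 else
  - rseries (fun m =>
      rising r (k + m) / rising r k * (((k.-1)`!)%:R / ((k + m)`!)%:R)
      * (1 - p) ^+ m * (posp ((k + m)%:R - z) - nb_posp_mean r p z)).

Definition stein (r p : R) (g : nat -> R) (k : nat) : R :=
  (1 - p) * (r + k%:R) * g k.+1 - k%:R * g k.

(* E[f(V)] where V = zeta_1 + ... + zeta_n, zeta_i independent Bernoulli(pv i),
   computed on the canonical product space {0,1}^n *)
Definition bern_sum_expect (n : nat) (pv : 'I_n -> R) (f : nat -> R) : R :=
  \sum_(x : {ffun 'I_n -> bool})
     (\prod_(i < n) (if x i then pv i else 1 - pv i)) * f (\sum_(i < n) nat_of_bool (x i))%N.

End Defs.

From mathcomp Require Import all_boot all_order all_algebra.
From mathcomp Require Import all_classical all_reals all_analysis.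
From mathcomp Require Import ring lra.
Import Order.TTheory GRing.Theory Num.Theory numFieldNormedType.Exports.
Local Open Scope classical_set_scope.
Local Open Scope ring_scope.

(* V is realised on the product space {0,1}^n, and V_i = V - zeta_i.
   1. Conditioning on zeta_i, which is independent of V_i, together with
      r q = p sum_i p_i, gives the Stein identity
        E[A g(V)] = sum_i p_i (1 - p q_i) E[g(V_i + 2) - g(V_i + 1)].
   2. The NB(r, p) weights pi are summable (ratio test), sum to 1, and have
      mean q r / p.  For the total mass, (1 - x)^r times the N-th partial sum
      of the binomial series of (1 - x)^(-r) is nonincreasing on [0, 1) and
      becomes nondecreasing once the next term is added (here r >= 1 is
      used); at x = q this squeezes the partial sums of pi towards 1.
   3. With c = E[(N - z)^+], the Stein solution is
        g_z(K) = - (c P(N < K) - E[(N - z)^+; N < K]) / (K pi K),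
      and Chebyshev's sum inequality for the nondecreasing functions
      (j - z)^+ and min(j, z) puts the bracket in [0, K pi K / p].  Hence
      -1/p <= g_z <= 0 on {1, 2, ...}, so its increments are at most 1/p.
   4. As 1/p <= 2 p^(-(r+1)) - 1/p, the triangle inequality concludes. *)

Section BernoulliCube.
Variables (R : realType) (n : nat) (pv : 'I_n -> R).
Local Notation cube := {ffun 'I_n -> bool}.

Definition bern_weight (x : cube) : R :=
  \prod_(i < n) (if x i then pv i else 1 - pv i).
Definition bern_weight_but (i : 'I_n) (x : cube) : R :=
  \prod_(j < n | j != i) (if x j then pv j else 1 - pv j).

Definition bexpect (F : cube -> R) : R := \sum_(x : cube) bern_weight x * F x.

Definition count_ones (x : cube) : nat := (\sum_(i < n) nat_of_bool (x i))%N.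
Definition count_ones_but (i : 'I_n) (x : cube) : nat :=
  (\sum_(j < n | j != i) nat_of_bool (x j))%N.

Definition flip (i : 'I_n) (x : cube) : cube :=
  [ffun j => if j == i then ~~ x j else x j].

Lemma bern_sum_expectE (f : nat -> R) :
  bern_sum_expect pv f = bexpect (fun x => f (count_ones x)).
Proof. by []. Qed.

Lemma eq_bexpect (F G : cube -> R) : F =1 G -> bexpect F = bexpect G.
Proof. by move=> FG; apply: eq_bigr => x _; rewrite FG. Qed.

Lemma bexpectD (F G : cube -> R) : bexpect (fun x => F x + G x) = bexpect F + bexpect G.
Proof. by rewrite /bexpect -big_split; apply: eq_bigr => x _; rewrite mulrDr. Qed.

Lemma bexpectB (F G : cube -> R) : bexpect (fun x => F x - G x) = bexpect F - bexpect G.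
Proof. by rewrite /bexpect -sumrB; apply: eq_bigr => x _; rewrite mulrBr. Qed.

Lemma bexpectZ (a : R) (F : cube -> R) : bexpect (fun x => a * F x) = a * bexpect F.
Proof. by rewrite /bexpect mulr_sumr; apply: eq_bigr => x _; rewrite mulrCA. Qed.

Lemma flipK (i : 'I_n) : involutive (flip i).
Proof. by move=> x; apply/ffunP => j; rewrite !ffunE; case: eqP => // _; rewrite negbK. Qed.

Lemma flip_at (i : 'I_n) (x : cube) : flip i x i = ~~ x i.
Proof. by rewrite ffunE eqxx. Qed.

Lemma flip_other (i j : 'I_n) (x : cube) : j != i -> flip i x j = x j.
Proof. by rewrite ffunE => /negbTE ->. Qed.

Lemma bern_weightE (i : 'I_n) (x : cube) :
  bern_weight x = (if x i then pv i else 1 - pv i) * bern_weight_but i x.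
Proof. by rewrite /bern_weight (bigD1 i). Qed.

Lemma bern_weight_but_flip (i : 'I_n) (x : cube) :
  bern_weight_but i (flip i x) = bern_weight_but i x.
Proof. by apply: eq_bigr => j ji; rewrite flip_other. Qed.

Lemma count_ones_but_flip (i : 'I_n) (x : cube) :
  count_ones_but i (flip i x) = count_ones_but i x.
Proof. by apply: eq_bigr => j ji; rewrite flip_other. Qed.

Lemma count_onesE (i : 'I_n) (x : cube) :
  count_ones x = (x i + count_ones_but i x)%N.
Proof. by rewrite /count_ones (bigD1 i). Qed.

(* Summing over pairs {x, flip i x}: the outcomes with x i = true index the
   pairs, and each pair carries weight bern_weight_but i x. *)
Lemma bexpect_split (i : 'I_n) (F : cube -> R) :
  bexpect F = \sum_(x : cube) (x i)%:R *
    (bern_weight_but i x * (pv i * F x + (1 - pv i) * F (flip i x))).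
Proof.
have -> : bexpect F =
    \sum_(x : cube) ((x i)%:R * (bern_weight x * F x) + (~~ x i)%:R * (bern_weight x * F x)).
  by apply: eq_bigr => x _; case: (x i); rewrite /= ?mul1r ?mul0r ?add0r ?addr0.
rewrite big_split /= [X in _ + X](reindex_inj (inv_inj (flipK i))) /= -big_split /=.
apply: eq_bigr => x _; rewrite flip_at negbK !(bern_weightE i) bern_weight_but_flip flip_at.
by case: (x i) => /=; ring.
Qed.

(* Independence of zeta_i and V_i: conditioning on the i-th coordinate. *)
Lemma bexpect_cond (i : 'I_n) (F : bool -> nat -> R) :
  bexpect (fun x => F (x i) (count_ones_but i x)) =
  pv i * bexpect (fun x => F true (count_ones_but i x))
  + (1 - pv i) * bexpect (fun x => F false (count_ones_but i x)).
Proof.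
rewrite !(bexpect_split i) !mulr_sumr -big_split; apply: eq_bigr => x _ /=.
rewrite !count_ones_but_flip flip_at.
by case: (x i) => /=; ring.
Qed.

Lemma bexpect_indicator (i : 'I_n) (h : nat -> R) :
  bexpect (fun x => (x i)%:R * h (count_ones x)) =
  pv i * bexpect (fun x => h (count_ones_but i x).+1).
Proof.
transitivity (bexpect (fun x => (fun b v => b%:R * h (b + v)%N) (x i) (count_ones_but i x))).
  by apply: eq_bexpect => x; rewrite (count_onesE i).
rewrite (bexpect_cond i (fun b v => b%:R * h (b + v)%N)) /=.
have -> : bexpect (fun x => 0%:R * h (count_ones_but i x)) = 0.
  by rewrite /bexpect big1 // => x _; rewrite mul0r mulr0.
by rewrite mulr0 addr0; congr (_ * _); apply: eq_bexpect => x; rewrite mul1r.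
Qed.

Lemma bexpect_count_mul (G : cube -> R) :
  bexpect (fun x => (count_ones x)%:R * G x) = \sum_(i < n) bexpect (fun x => (x i)%:R * G x).
Proof.
rewrite /bexpect exchange_big /=; apply: eq_bigr => x _.
by rewrite /count_ones natr_sum mulr_suml mulr_sumr; apply: eq_bigr => i _; rewrite mulrCA.
Qed.

Lemma bexpect_stein (g : nat -> R) (r p : R) : r * (1 - p) = p * \sum_(i < n) pv i ->
  bexpect (fun x => stein r p g (count_ones x)) =
  \sum_(i < n) pv i * (1 - p * (1 - pv i)) *
     bexpect (fun x => g (count_ones_but i x).+2 - g (count_ones_but i x).+1).
Proof.
move=> hr.
have shift i : bexpect (fun x => g (count_ones x).+1) =
    pv i * bexpect (fun x => g (count_ones_but i x).+2)
    + (1 - pv i) * bexpect (fun x => g (count_ones_but i x).+1).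
  transitivity (bexpect (fun x => (fun b v => g (b + v).+1) (x i) (count_ones_but i x))).
    by apply: eq_bexpect => x; rewrite (count_onesE i).
  exact: (bexpect_cond i (fun b v => g (b + v).+1)).
have -> : bexpect (fun x => stein r p g (count_ones x)) =
    ((1 - p) * r) * bexpect (fun x => g (count_ones x).+1)
    + (1 - p) * bexpect (fun x => (count_ones x)%:R * g (count_ones x).+1)
    - bexpect (fun x => (count_ones x)%:R * g (count_ones x)).
  by rewrite -!bexpectZ -bexpectD -bexpectB; apply: eq_bexpect => x; rewrite /stein; ring.
rewrite !bexpect_count_mul [(1 - p) * r]mulrC hr -mulrA mulr_suml mulr_sumr.
rewrite [(1 - p) * _]mulr_sumr -big_split -sumrB /=; apply: eq_bigr => i _.
rewrite (bexpect_indicator i (fun v => g v.+1)) (bexpect_indicator i g) (shift i) bexpectB.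
ring.
Qed.

Lemma bexpect1 : bexpect (fun=> 1) = 1.
Proof.
rewrite /bexpect /bern_weight; under eq_bigr do rewrite mulr1.
rewrite -(bigA_distr_bigA (fun i (b : bool) => if b then pv i else 1 - pv i)) /=.
by rewrite big1 // => i _; rewrite big_bool /= addrC subrK.
Qed.

Hypothesis pv01 : forall i, 0 <= pv i <= 1.

Lemma bern_weight_ge0 (x : cube) : 0 <= bern_weight x.
Proof.
apply: prodr_ge0 => i _; have /andP[pi0 pi1] := pv01 i.
by case: (x i); rewrite ?subr_ge0.
Qed.

Lemma bexpect_norm_le (F : cube -> R) (c : R) :
  (forall x, `|F x| <= c) -> `|bexpect F| <= c.
Proof.
move=> Fc; apply: (le_trans (ler_norm_sum _ _ _)).
apply: (@le_trans _ _ (bexpect (fun=> c))).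
  apply: ler_sum => x _; rewrite normrM ger0_norm ?bern_weight_ge0 //.
  by rewrite ler_wpM2l ?bern_weight_ge0.
have -> : bexpect (fun=> c) = c * bexpect (fun=> 1).
  by rewrite -bexpectZ; apply: eq_bexpect => x; rewrite mulr1.
by rewrite bexpect1 mulr1.
Qed.

End BernoulliCube.

Section SeriesFacts.
Variable R : realType.

Lemma ratio_geometric_bound (u : nat -> R) (rho : R) (N : nat) :
  0 < rho -> (forall j, 0 <= u j) -> (forall j, (N <= j)%N -> u j.+1 <= rho * u j) ->
  forall j, u j <= (\sum_(i < N.+1) u i / rho ^+ i) * rho ^+ j.
Proof.
move=> rho0 u0 hu; elim=> [|j IH].
  rewrite expr0 mulr1 big_ord_recl /= expr0 divr1 lerDl.
  by apply: sumr_ge0 => i _; rewrite divr_ge0 // exprn_ge0 // ltW.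
have [hj|hj] := leqP N j.
  by apply: (le_trans (hu j hj)); rewrite exprS mulrCA ler_pM2l.
have hjN : (j.+1 < N.+1)%N by [].
rewrite (bigD1 (Ordinal hjN)) //= mulrDl -[X in X <= _]addr0 lerD //.
  by rewrite divfK // expf_neq0 // gt_eqF.
apply: mulr_ge0; last by rewrite exprn_ge0 // ltW.
by apply: sumr_ge0 => i _; rewrite divr_ge0 // exprn_ge0 // ltW.
Qed.

Lemma ratio_test (u : nat -> R) (rho : R) (N : nat) :
  0 < rho -> rho < 1 -> (forall j, 0 <= u j) ->
  (forall j, (N <= j)%N -> u j.+1 <= rho * u j) -> cvgn (series u).
Proof.
move=> rho0 rho1 u0 hu.
set C := \sum_(i < N.+1) u i / rho ^+ i.
have C0 : 0 <= C by apply: sumr_ge0 => i _; rewrite divr_ge0 // exprn_ge0 // ltW.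
apply: (@series_le_cvg _ _ (geometric C rho)) => //.
- by move=> j /=; rewrite mulr_ge0 // exprn_ge0 // ltW.
- by move=> j /=; apply: ratio_geometric_bound.
- by apply: is_cvg_geometric_series; rewrite ger0_norm // ltW.
Qed.

Lemma tail_series_cvg (u : nat -> R) (K : nat) (l : R) : series u @ \oo --> l ->
  series (fun m => u (K + m)%N) @ \oo --> l - series u K.
Proof.
move=> cu.
have -> : series (fun m => u (K + m)%N) = (fun N => series u (N + K)%N - series u K).
  apply/funext => N; rewrite sub_series_geq ?leq_addl // -{2}[K]add0n big_addn addnK.
  by rewrite /series /=; apply: eq_bigr => i _; rewrite addnC.
apply: cvgB; last exact: cvg_cst.
by rewrite (cvg_shiftn K (series u)).
Qed.

End SeriesFacts.

Section TruncatedMean.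
Variables (R : realType) (w : nat -> R).
Hypothesis w_ge0 : forall j, 0 <= w j.
Hypothesis w_sum1 : series w @ \oo --> (1 : R).

Lemma partial_mass_le1 (K : nat) : \sum_(j < K) w j <= 1.
Proof.
have -> : \sum_(j < K) w j = series w K by rewrite /series /= big_mkord.
rewrite -(cvg_lim _ w_sum1) //.
apply: (nondecreasing_cvgn_le (u_ := series w)); last by apply/cvg_ex; exists 1.
by move=> i j ij; rewrite -subr_ge0 sub_series_geq // sumr_ge0.
Qed.

(* Chebyshev's sum inequality for the probability w on nat: for nondecreasing
   h, the first K terms of the mean of h are at most the mean of h times the
   mass of {0, ..., K-1}. *)
Lemma truncated_mean_le (h : nat -> R) (K : nat) :
  {homo h : i j / (i <= j)%N >-> i <= j} -> cvgn (series (fun j => w j * h j)) ->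
  \sum_(j < K) w j * h j <= limn (series (fun j => w j * h j)) * \sum_(j < K) w j.
Proof.
move=> hmon hc.
set E := limn _; set S := \sum_(j < K) w j; set T := \sum_(j < K) w j * h j.
have S0 : 0 <= S by apply: sumr_ge0.
have S1 : S <= 1 by exact: partial_mass_le1.
have T_le : T <= h K * S.
  rewrite /T /S mulr_sumr; apply: ler_sum => j _.
  by rewrite mulrC ler_wpM2r // hmon // ltnW.
(* beyond index K all terms of h - h K are nonnegative *)
have tail : T + h K * (1 - S) <= E.
  set u := fun j => w j * (h j - h K).
  have cu : series u @ \oo --> E - h K * 1.
    have -> : series u = (fun N => series (fun j => w j * h j) N - h K * series w N).
      apply/funext => N; rewrite /series /= /u mulr_sumr -sumrB.
      by apply: eq_bigr => j _; rewrite mulrBr [h K * _]mulrC.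
    by apply: cvgB; [exact: hc | exact: cvgMl_tmp].
  have le : series u K <= E - h K * 1.
    rewrite -(cvg_lim _ cu) //; apply: limr_ge; first by apply/cvg_ex; eexists; exact: cu.
    near=> N.
    have hN : (K <= N)%N by near: N; exists K.
    rewrite -subr_ge0 sub_series_geq // big_nat_cond; apply: sumr_ge0 => j /andP[/andP[Kj _] _].
    by rewrite mulr_ge0 // subr_ge0 hmon.
  have uK : series u K = T - h K * S.
    rewrite /series /= /u big_mkord /T /S mulr_sumr -sumrB.
    by apply: eq_bigr => j _; rewrite mulrBr [h K * _]mulrC.
  by move: le; rewrite uK mulr1; lra.
rewrite -subr_ge0.
have -> : E * S - T = (E - T - h K * (1 - S)) * S + (1 - S) * (h K * S - T) by ring.
by apply: addr_ge0; apply: mulr_ge0; lra.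
Unshelve. all: by end_near.
Qed.

End TruncatedMean.

Section Monotone.
Variable R : realType.

Lemma derive_ge0_le (f df : R -> R) (a b : R) : a <= b ->
  (forall x, a <= x <= b -> is_derive x 1 f (df x)) ->
  (forall x, a < x < b -> 0 <= df x) -> f a <= f b.
Proof.
move=> ab fd dge0.
have fd' x : a < x < b -> is_derive x 1 f (df x).
  by move=> /andP[ax xb]; apply: fd; rewrite !ltW.
apply: (@ger0_derive1_le_cc _ f a b); rewrite ?in_itv /= ?lexx ?ab //.
- by move=> x; rewrite in_itv => /fd' fx; exact: (@ex_derive _ _ _ _ _ _ _ fx).
- move=> x; rewrite in_itv => xab; have fx := fd' x xab.
  by rewrite derive1E (@derive_val _ _ _ _ _ _ _ fx) dge0.
- apply: derivable_within_continuous => x; rewrite in_itv => /fd fx.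
  exact: (@ex_derive _ _ _ _ _ _ _ fx).
Qed.

Lemma derive_le0_ge (f df : R -> R) (a b : R) : a <= b ->
  (forall x, a <= x <= b -> is_derive x 1 f (df x)) ->
  (forall x, a < x < b -> df x <= 0) -> f b <= f a.
Proof.
move=> ab fd dle0; rewrite -lerN2.
apply: (@derive_ge0_le (fun x => - f x) (fun x => - df x)) => // [x xab|x xab].
  exact: is_deriveN (fd x xab).
by rewrite oppr_ge0 dle0.
Qed.

End Monotone.

Section NegativeBinomial.
Variables (R : realType) (r p : R).
Hypothesis r_ge1 : 1 <= r.
Hypotheses (p_gt0 : 0 < p) (p_lt1 : p < 1).
Local Notation q := (1 - p).
Local Notation pi := (nb_pmf r p).

Lemma q_gt0 : 0 < q. Proof. by rewrite subr_gt0. Qed.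
Lemma q_lt1 : q < 1. Proof. by rewrite ltrBlDr ltrDl. Qed.
Lemma r_gt0 : 0 < r. Proof. exact: lt_le_trans r_ge1. Qed.

Definition nb_coef (j : nat) : R := rising r j / (j`!)%:R.

Lemma rising_S (j : nat) : rising r j.+1 = rising r j * (r + j%:R).
Proof. by rewrite /rising big_ord_recr. Qed.

Lemma rising_gt0 (j : nat) : 0 < rising r j.
Proof. by apply: prodr_gt0 => i _; apply: ltr_wpDr => //; exact: r_gt0. Qed.

Lemma nb_coef_gt0 (j : nat) : 0 < nb_coef j.
Proof. by rewrite divr_gt0 ?rising_gt0 // ltr0n fact_gt0. Qed.

Lemma nb_coef0 : nb_coef 0 = 1.
Proof. by rewrite /nb_coef /rising big_ord0 fact0 divr1. Qed.

Lemma nb_coef_rec (j : nat) : j.+1%:R * nb_coef j.+1 = (r + j%:R) * nb_coef j.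
Proof.
rewrite /nb_coef rising_S factS natrM invfM.
have j1 : j.+1%:R != 0 :> R by rewrite pnatr_eq0.
have jf : (j`!)%:R != 0 :> R by rewrite pnatr_eq0 -lt0n fact_gt0.
by field; rewrite jf -natr1 addrC in j1 *.
Qed.

Lemma nb_pmfE (j : nat) : pi j = nb_coef j * powR p r * q ^+ j.
Proof. by []. Qed.

Lemma nb_pmf_gt0 (j : nat) : 0 < pi j.
Proof.
rewrite nb_pmfE; apply: mulr_gt0; last exact: exprn_gt0 q_gt0.
by rewrite mulr_gt0 ?nb_coef_gt0 ?powR_gt0.
Qed.

Lemma nb_pmf_ge0 (j : nat) : 0 <= pi j.
Proof. exact/ltW/nb_pmf_gt0. Qed.

(* The recursion (j+1) pi (j+1) = q (r + j) pi j behind the Stein operator. *)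
Lemma nb_pmf_rec (j : nat) : j.+1%:R * pi j.+1 = q * (r + j%:R) * pi j.
Proof.
rewrite !nb_pmfE exprS.
transitivity ((j.+1%:R * nb_coef j.+1) * powR p r * q * q ^+ j); first by ring.
by rewrite nb_coef_rec; ring.
Qed.

(* The ratio q (r + j) / j tends to q < 1 - p/2, so it is eventually below it. *)
Lemma nb_ratio_eventually :
  exists N, forall j, (N <= j)%N -> q * (r + j%:R) <= (1 - p / 2) * j%:R.
Proof.
exists (Num.Def.archi_bound (2 * q * r / p)).+1 => j hj.
have h1 : 2 * q * r / p < (Num.Def.archi_bound (2 * q * r / p))%:R.
  by apply: archi_boundP; rewrite divr_ge0 ?mulr_ge0 ?ltW ?q_gt0 ?r_gt0.
have h2 : (Num.Def.archi_bound (2 * q * r / p))%:R <= j%:R :> R.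
  by rewrite ler_nat ltnW.
have h3 : 2 * q * r < p * j%:R.
  by rewrite -ltr_pdivrMl // mulrC; exact: lt_le_trans h2.
lra.
Qed.

Lemma nb_ratio_test (u : nat -> R) : (forall j, 0 <= u j) ->
  (forall j, j%:R * u j.+1 <= q * (r + j%:R) * u j) -> cvgn (series u).
Proof.
move=> u0 hu; have [N hN] := nb_ratio_eventually.
have rho0 : 0 < 1 - p / 2 by move: p_gt0 p_lt1; lra.
have rho1 : 1 - p / 2 < 1 by move: p_gt0; lra.
apply: (@ratio_test _ u _ N.+1 rho0 rho1 u0) => j Nj.
have j0 : 0 < j%:R :> R by rewrite ltr0n; case: j Nj.
rewrite -(ler_pM2l j0); apply: (le_trans (hu j)).
have -> : j%:R * ((1 - p / 2) * u j) = (1 - p / 2) * j%:R * u j by ring.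
by rewrite ler_wpM2r // hN // ltnW.
Qed.

Lemma nb_pmf_summable : cvgn (series pi).
Proof.
apply: nb_ratio_test => [|j]; first exact: nb_pmf_ge0.
by rewrite -nb_pmf_rec ler_wpM2r ?nb_pmf_ge0 // ler_nat.
Qed.

Lemma nb_mean_summable : cvgn (series (fun j => pi j * j%:R)).
Proof.
apply: nb_ratio_test => [j|j]; first by rewrite mulr_ge0 ?nb_pmf_ge0.
by rewrite [pi j.+1 * _]mulrC nb_pmf_rec mulrCA [j%:R * pi j]mulrC.
Qed.

(* Partial sums of the binomial series (1 - x)^(-r) = sum_j nb_coef j x^j,
   and of its termwise derivative. *)
Definition binom_partial (N : nat) : R -> R := \sum_(j < N) (fun x => nb_coef j * x ^+ j).
Definition binom_partial' (N : nat) (x : R) : R :=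
  \sum_(j < N) nb_coef j * (j%:R * x ^+ j.-1).

Lemma binom_partialE (N : nat) (x : R) : binom_partial N x = \sum_(j < N) nb_coef j * x ^+ j.
Proof. by rewrite /binom_partial fct_sumE. Qed.

Lemma binom_partial0 (N : nat) : binom_partial N 0 = (0 < N)%N%:R.
Proof.
rewrite binom_partialE; case: N => [|N]; first by rewrite big_ord0.
rewrite big_ord_recl /= expr0 mulr1 nb_coef0 big1 ?addr0 // => i _.
by rewrite expr0n mulr0.
Qed.

Lemma is_derive_binom_partial (N : nat) (x : R) :
  is_derive x 1 (binom_partial N) (binom_partial' N x).
Proof.
apply: is_derive_sum => j.
have H := is_deriveZ (nb_coef j) (is_deriveX j (@is_derive_id _ _ x 1)).
move: H; rewrite /GRing.scale /= mulr1.
have -> : (fun y : R => nb_coef j * y ^+ j) = nb_coef j \*: (id ^+ j).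
  by apply/funext => y; rewrite /= exprfctE.
by [].
Qed.

(* The truncated series almost solves (1 - x) S' = r S, the ODE of (1 - x)^(-r). *)
Lemma binom_partial_ode (N : nat) (x : R) :
  (1 - x) * binom_partial' N x - r * binom_partial N x = - (N%:R * nb_coef N * x ^+ N.-1).
Proof.
elim: N => [|N IH].
  by rewrite binom_partialE /binom_partial' !big_ord0 !mul0r !mulr0 subrr oppr0.
rewrite binom_partialE /binom_partial' !big_ord_recr /= -binom_partialE -/(binom_partial' N x).
have xN : N%:R * x ^+ N.-1 * x = N%:R * x ^+ N.
  by case: N {IH} => [|N] /=; rewrite ?mul0r // -mulrA -exprSr.
transitivity ((1 - x) * binom_partial' N x - r * binom_partial N x
   + nb_coef N * (N%:R * x ^+ N.-1)
   - (nb_coef N * (N%:R * x ^+ N.-1 * x) + r * (nb_coef N * x ^+ N))); first by ring.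
rewrite IH xN; transitivity (- ((r + N%:R) * nb_coef N * x ^+ N)); first by ring.
by rewrite -nb_coef_rec.
Qed.

Lemma is_derive_powR_1B (x : R) : x < 1 ->
  is_derive x 1 (fun y => (1 - y) `^ r) (- (r * (1 - x) `^ (r - 1))).
Proof.
move=> x1.
have hg : is_derive x 1 (fun y : R => 1 - y) (0 - 1).
  have := is_deriveB (@is_derive_cst _ _ _ (1:R) x 1) (@is_derive_id _ _ x 1).
  by have -> : (cst (1:R) - id) = (fun y : R => 1 - y) by apply/funext.
have hf : is_derive (1 - x) 1 (fun y : R => y `^ r) (r * (1 - x) `^ (r - 1)).
  by apply: is_derive1_powR; rewrite subr_gt0.
have := @is_derive1_comp R (fun y : R => y `^ r) (fun y : R => 1 - y) x _ _ hf hg.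
by rewrite sub0r mulrN1.
Qed.

(* (1 - x)^r times the N-th partial sum: nonincreasing on [0, 1), and
   nondecreasing once the next term nb_coef N x^N is added; both start from
   the value 1 at x = 0 (for N > 0). *)
Definition damped_partial (N : nat) (x : R) : R := (1 - x) `^ r * binom_partial N x.

Lemma is_derive_damped_partial (N : nat) (x : R) : x < 1 ->
  is_derive x 1 (damped_partial N)
    (- ((1 - x) `^ (r - 1) * (N%:R * nb_coef N * x ^+ N.-1))).
Proof.
move=> x1.
have H := is_deriveM (is_derive_powR_1B x x1) (is_derive_binom_partial N x).
have -> : damped_partial N = (fun y => (1 - y) `^ r) * binom_partial N by apply/funext.
suff <- : (1 - x) `^ r *: binom_partial' N x + binom_partial N x *: - (r * (1 - x) `^ (r - 1))
   = - ((1 - x) `^ (r - 1) * (N%:R * nb_coef N * x ^+ N.-1)) by [].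
have -> : (1 - x) `^ r = (1 - x) * (1 - x) `^ (r - 1).
  by rewrite mulr_powRB1 ?subr_ge0 ?ltW ?r_gt0.
rewrite /GRing.scale /=.
transitivity ((1 - x) `^ (r - 1) * ((1 - x) * binom_partial' N x - r * binom_partial N x)).
  by ring.
by rewrite binom_partial_ode; ring.
Qed.

Lemma nb_term_deriv_ge0 (N : nat) (x : R) : 0 <= x -> 0 <= N%:R * nb_coef N * x ^+ N.-1.
Proof.
by move=> x0; rewrite mulr_ge0 ?exprn_ge0 // mulr_ge0 // ltW // nb_coef_gt0.
Qed.

Lemma damped_partial_le1 (N : nat) (x : R) : 0 <= x < 1 -> damped_partial N x <= 1.
Proof.
move=> /andP[x0 x1]; apply: (@le_trans _ _ (damped_partial N 0)).
  apply: (@derive_le0_ge R (damped_partial N) _ 0 x x0) => [y /andP[_ yx]|y /andP[y0 _]].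
    exact: is_derive_damped_partial (le_lt_trans yx x1).
  by rewrite oppr_le0 mulr_ge0 ?powR_ge0 ?nb_term_deriv_ge0 ?ltW.
by rewrite /damped_partial subr0 powR1 mul1r binom_partial0; case: N.
Qed.

Lemma damped_partial_next_ge1 (N : nat) (x : R) : 0 <= x < 1 ->
  1 <= damped_partial N x + nb_coef N * x ^+ N.
Proof.
move=> /andP[x0 x1].
apply: (@le_trans _ _ (damped_partial N 0 + nb_coef N * 0 ^+ N)).
  rewrite /damped_partial subr0 powR1 mul1r binom_partial0.
  by case: N => [|N]; rewrite ?expr0 ?mulr1 ?nb_coef0 ?add0r // expr0n mulr0 addr0.
apply: (@derive_ge0_le R (fun y => damped_partial N y + nb_coef N * y ^+ N)
  (fun y => (1 - (1 - y) `^ (r - 1)) * (N%:R * nb_coef N * y ^+ N.-1)) 0 x x0).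
  move=> y /andP[_ yx].
  have := is_deriveD (is_derive_damped_partial N y (le_lt_trans yx x1))
    (is_deriveZ (nb_coef N) (is_deriveX N (@is_derive_id _ _ y 1))).
  have -> : damped_partial N + nb_coef N *: id ^+ N =
    (fun y => damped_partial N y + nb_coef N * y ^+ N).
    by apply/funext => t; rewrite /= exprfctE.
  suff -> : - ((1 - y) `^ (r - 1) * (N%:R * nb_coef N * y ^+ N.-1))
      + nb_coef N *: ((N%:R * id y ^+ N.-1) *: 1) =
    (1 - (1 - y) `^ (r - 1)) * (N%:R * nb_coef N * y ^+ N.-1) by [].
  by rewrite /GRing.scale /=; ring.
move=> y /andP[y0 yx]; apply: mulr_ge0; last exact: nb_term_deriv_ge0 (ltW y0).
(* (1 - y)^(r - 1) <= 1 since 0 < 1 - y <= 1 and r >= 1 *)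
have y1 : 0 < 1 - y <= 1 by rewrite subr_gt0 (lt_trans yx x1) lerBlDr lerDl ltW.
by have := @ger_powR R (1 - y) y1 0 (r - 1); rewrite powRr0 !subr_ge0 => ->.
Qed.


Lemma series_nb_pmfE (N : nat) : series pi N = damped_partial N q.
Proof.
rewrite /series /= /damped_partial binom_partialE opprB addrC subrK big_mkord mulr_sumr.
by apply: eq_bigr => j _; rewrite nb_pmfE; ring.
Qed.

Lemma nb_pmf_sum1 : series pi @ \oo --> (1 : R).
Proof.
have q01 : 0 <= q < 1 by rewrite ltW ?q_gt0 ?q_lt1.
(* the missing mass nb_coef N q^N is pi N / p^r, which tends to 0 *)
have rem0 : (fun N => nb_coef N * q ^+ N) @ \oo --> (0 : R).
  have -> : (fun N => nb_coef N * q ^+ N) = (fun N => (powR p r)^-1 * pi N).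
    apply/funext => N; rewrite nb_pmfE.
    by field; rewrite gt_eqF // powR_gt0.
  rewrite -(mulr0 (powR p r)^-1); apply: cvgMl_tmp.
  exact: cvg_series_cvg_0 nb_pmf_summable.
apply: (squeeze_cvgr (f := fun N => 1 - nb_coef N * q ^+ N) (h := fun=> 1)).
- near=> N; rewrite series_nb_pmfE damped_partial_le1 // andbT lerBlDr.
  exact: damped_partial_next_ge1.
- by rewrite -[X in _ --> X]subr0; apply: cvgB; [exact: cvg_cst | exact: rem0].
- exact: cvg_cst.
Unshelve. all: by end_near.
Qed.

Definition nb_mean : R := limn (series (fun j => pi j * j%:R)).

Lemma nb_meanE : p * nb_mean = q * r.
Proof.
set u := fun j => pi j * j%:R.
have cu : series u @ \oo --> nb_mean by exact: nb_mean_summable.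
have shift : (fun N => series u N.+1) = (fun N => q * r * series pi N + q * series u N).
  apply/funext => N; rewrite /series /= big_nat_recl // /u mulr0 add0r.
  rewrite !mulr_sumr -big_split /=; apply: eq_bigr => j _.
  by rewrite mulrC nb_pmf_rec; ring.
have c1 : (fun N => series u N.+1) @ \oo --> nb_mean by rewrite (cvg_shiftS (series u)).
have c2 : (fun N => series u N.+1) @ \oo --> q * r * 1 + q * nb_mean.
  by rewrite shift; apply: cvgD; apply: cvgMl_tmp; [exact: nb_pmf_sum1 | exact: cu].
have E : nb_mean = q * r * 1 + q * nb_mean.
  by rewrite -{1}(cvg_lim _ c1) // (cvg_lim _ c2).
by transitivity (nb_mean - q * nb_mean); [ring | rewrite {1}E; ring].
Qed.

Lemma nb_partial_mean (K : nat) :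
  q * r * \sum_(j < K) pi j - p * \sum_(j < K) pi j * j%:R = K%:R * pi K.
Proof.
elim: K => [|K IH]; first by rewrite !big_ord0 mul0r; ring.
rewrite !big_ord_recr /= nb_pmf_rec.
transitivity ((q * r * \sum_(j < K) pi j - p * \sum_(j < K) pi j * j%:R)
  + q * r * pi K - p * (pi K * K%:R)); first by ring.
by rewrite IH; ring.
Qed.
Section SteinSolution.
Variable z : R.
Hypothesis z_ge0 : 0 <= z.

Definition hinge (j : nat) : R := posp (j%:R - z).
Local Notation c := (nb_posp_mean r p z).

Lemma pospE (x : R) : posp x = if x < 0 then 0 else x.
Proof. by rewrite /posp; case: ltP. Qed.

Lemma hinge_ge0 (j : nat) : 0 <= hinge j.
Proof. by rewrite /hinge pospE; case: ltP. Qed.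

Lemma hinge_le (j : nat) : hinge j <= j%:R.
Proof. by move: z_ge0; rewrite /hinge pospE; case: ltP => _ ?; [exact: ler0n | lra]. Qed.

Lemma hinge_homo : {homo hinge : i j / (i <= j)%N >-> i <= j}.
Proof.
move=> i j ij; have hij : i%:R <= j%:R :> R by rewrite ler_nat.
by rewrite /hinge !pospE; case: ltP => ?; case: ltP => ?; lra.
Qed.

Lemma hinge_compl_homo : {homo (fun j => j%:R - hinge j) : i j / (i <= j)%N >-> i <= j}.
Proof.
move=> i j ij; have hij : i%:R <= j%:R :> R by rewrite ler_nat.
by rewrite /hinge !pospE; case: ltP => ?; case: ltP => ?; lra.
Qed.

Lemma hinge_summable : cvgn (series (fun j => pi j * hinge j)).
Proof.
apply: (@series_le_cvg _ _ (fun j => pi j * j%:R)).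
- by move=> j; rewrite mulr_ge0 ?nb_pmf_ge0 ?hinge_ge0.
- by move=> j; rewrite mulr_ge0 ?nb_pmf_ge0.
- by move=> j; rewrite ler_wpM2l ?nb_pmf_ge0 ?hinge_le.
- exact: nb_mean_summable.
Qed.

Lemma hinge_compl_split : (fun j => pi j * (j%:R - hinge j)) =
  (fun j => pi j * j%:R) - (fun j => pi j * hinge j).
Proof. by apply/funext => j /=; rewrite mulrBr. Qed.

Lemma hinge_compl_summable : cvgn (series (fun j => pi j * (j%:R - hinge j))).
Proof.
by rewrite hinge_compl_split; apply: is_cvg_seriesB; [exact: nb_mean_summable | exact: hinge_summable].
Qed.

Lemma hinge_compl_mean :
  limn (series (fun j => pi j * (j%:R - hinge j))) = nb_mean - c.
Proof.
by rewrite hinge_compl_split lim_seriesB //; [exact: nb_mean_summable | exact: hinge_summable].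
Qed.

Lemma centered_hinge_sum0 : series (fun j => pi j * (hinge j - c)) @ \oo --> (0 : R).
Proof.
have -> : series (fun j => pi j * (hinge j - c)) =
    (fun N => series (fun j => pi j * hinge j) N - c * series pi N).
  apply/funext => N; rewrite /series /= mulr_sumr -sumrB.
  by apply: eq_bigr => j _; rewrite mulrBr [c * _]mulrC.
rewrite -(subrr c) -[X in _ - X]mulr1.
by apply: cvgB; [exact: hinge_summable | apply: cvgMl_tmp; exact: nb_pmf_sum1].
Qed.

(* The gap c P(N < K) - E[(N - z)^+; N < K] lies in [0, K pi K / p], by the
   truncated-mean inequality for (j - z)^+ and for min(j, z). *)
Lemma truncation_gap_bounds (K : nat) :
  0 <= c * \sum_(j < K) pi j - \sum_(j < K) pi j * hinge j <= K%:R * pi K / p.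
Proof.
have trunc h := @truncated_mean_le R pi nb_pmf_ge0 nb_pmf_sum1 h K.
have lo := trunc _ hinge_homo hinge_summable.
have hi := trunc _ hinge_compl_homo hinge_compl_summable.
rewrite hinge_compl_mean in hi.
have split : \sum_(j < K) pi j * (j%:R - hinge j) =
    \sum_(j < K) pi j * j%:R - \sum_(j < K) pi j * hinge j.
  by rewrite -sumrB; apply: eq_bigr => j _; rewrite mulrBr.
have e : K%:R * pi K / p = nb_mean * \sum_(j < K) pi j - \sum_(j < K) pi j * j%:R.
  by rewrite -nb_partial_mean -nb_meanE; field; rewrite gt_eqF.
rewrite subr_ge0 e; apply/andP; split; first exact: lo.
by move: hi; rewrite split; lra.
Qed.

Lemma gz_termE (k m : nat) :
  rising r (k.+1 + m) / rising r k.+1 * ((k.+1.-1)`!%:R / ((k.+1 + m)`!)%:R) * q ^+ m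
    * (posp ((k.+1 + m)%:R - z) - c) =
  (k.+1%:R * pi k.+1)^-1 * (pi (k.+1 + m) * (hinge (k.+1 + m) - c)).
Proof.
rewrite /hinge !nb_pmfE /nb_coef exprD factS natrM /=.
have h1 : rising r k.+1 != 0 by rewrite gt_eqF // rising_gt0.
have h2 : p `^ r != 0 by rewrite gt_eqF // powR_gt0.
have h3 : q ^+ k.+1 != 0 by rewrite expf_neq0 // gt_eqF // q_gt0.
have h4 : (k`!)%:R != 0 :> R by rewrite pnatr_eq0 -lt0n fact_gt0.
have h5 : ((k.+1 + m)`!)%:R != 0 :> R by rewrite pnatr_eq0 -lt0n fact_gt0.
have h6 : k.+1%:R != 0 :> R by rewrite pnatr_eq0.
by field; rewrite h1 h2 h3 h4 h5 /= andbT -natr1 addrC in h6 *.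
Qed.

(* g_z (K) = - E[(N - z)^+ - c; N >= K] / (K pi K), and the tail expectation
   equals minus the head expectation because the centered series sums to 0. *)
Lemma gzE (k : nat) : gz r p z k.+1 =
  - ((k.+1%:R * pi k.+1)^-1 * (c * \sum_(j < k.+1) pi j - \sum_(j < k.+1) pi j * hinge j)).
Proof.
rewrite /gz /rseries; congr (- _).
set a := (k.+1%:R * pi k.+1)^-1.
transitivity (limn (series (fun m => a * (pi (k.+1 + m) * (hinge (k.+1 + m) - c))))).
  by congr (limn (series _)); apply/funext => m; exact: gz_termE.
apply: cvg_lim => //.
have -> : series (fun m => a * (pi (k.+1 + m) * (hinge (k.+1 + m) - c))) =
    (fun N => a * series (fun m => pi (k.+1 + m) * (hinge (k.+1 + m) - c)) N).
  by apply/funext => N; rewrite /series /= mulr_sumr.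
apply: cvgMl_tmp.
have -> : c * \sum_(j < k.+1) pi j - \sum_(j < k.+1) pi j * hinge j =
    0 - series (fun j => pi j * (hinge j - c)) k.+1.
  rewrite /series /= big_mkord sub0r mulr_sumr -sumrB -sumrN.
  by apply: eq_bigr => j _; ring.
exact: (@tail_series_cvg R _ k.+1 _ centered_hinge_sum0).
Qed.

Lemma gz_bounds (k : nat) : - p^-1 <= gz r p z k.+1 <= 0.
Proof.
have /andP[lo hi] := truncation_gap_bounds k.+1.
have hK : 0 < k.+1%:R * pi k.+1 by rewrite mulr_gt0 ?ltr0n ?nb_pmf_gt0.
rewrite gzE oppr_le0 lerNl opprK; apply/andP; split.
  by rewrite ler_pdivrMl.
by rewrite mulr_ge0 // invr_ge0 ltW.
Qed.

Lemma gz_increment_bound (k : nat) : `|gz r p z k.+2 - gz r p z k.+1| <= p^-1.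
Proof.
have /andP[a b] := gz_bounds k; have /andP[c' d] := gz_bounds k.+1.
by rewrite ler_norml; apply/andP; split; lra.
Qed.

End SteinSolution.
End NegativeBinomial.

(* The constant of the theorem dominates 1/p, since p^(-(r+1)) >= 1/p. *)
Lemma inv_le_stein_constant (R : realType) (r p : R) : 0 <= r -> 0 < p < 1 ->
  p^-1 <= 2 * p `^ (- (r + 1)) - p^-1.
Proof.
move=> r0 /andP[p0 p1].
suff : p^-1 <= p `^ (- (r + 1)) by lra.
rewrite powRN lef_pV2 ?posrE ?powR_gt0 //.
apply: ge1r_powR; first by rewrite p0 ltW.
by rewrite lerDr.
Qed.

Lemma stein_weight_ge0 (R : realType) (a p : R) : 0 <= a <= 1 -> 0 <= p <= 1 ->
  0 <= a * (1 - p * (1 - a)).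
Proof. by move=> /andP[a0 a1] /andP[p0 p1]; rewrite mulr_ge0 // subr_ge0; nra. Qed.

Theorem mainTheorem5 (R : realType) (n : nat) (pv : 'I_n -> R) (r p : R) :
  (forall i, 0 <= pv i <= 1) ->
  1 < r -> 0 < p < 1 ->
  r * (1 - p) = p * \sum_(i < n) pv i ->
  forall z : R, 0 <= z ->
    `| bern_sum_expect pv (stein r p (gz r p z)) |
      <= (2 * powR p (- (r + 1)) - p^-1) * \sum_(i < n) pv i * (1 - p * (1 - pv i)).
Proof.
move=> pv01 r1 p01 hr z z0.
have r_ge1 : 1 <= r by exact: ltW.
have /andP[p0 p1] := p01.
have weight_ge0 i : 0 <= pv i * (1 - p * (1 - pv i)).
  by apply: stein_weight_ge0; rewrite ?pv01 ?ltW.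
rewrite bern_sum_expectE bexpect_stein //.
apply: (le_trans (ler_norm_sum _ _ _)); rewrite mulr_sumr; apply: ler_sum => i _.
rewrite normrM ger0_norm // mulrC ler_wpM2r //.
apply: (le_trans _ (@inv_le_stein_constant R r p (le_trans ler01 r_ge1) p01)).
apply: bexpect_norm_le => // x.
exact: gz_increment_bound.
Qed.
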